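(* Let $(X,\to,d_A)$ be a metric transition system over $A$, let $d_0\in\mathit{DPMet}(X)$, and define $\beta_{d_0}\colon\mathit{DPMet}(\mathcal P(X))\to\mathit{DPMet}(\mathcal P(X))$ by $\beta_{d_0}(d)=\beta_T(d)\vee(d_0)_{\overrightarrow H}$. Then for all $X_1,X_2\subseteq X$, the least fixpoint satisfies: $\mu\beta_{d_0}(X_1,X_2)$ is the infimum of those $\varepsilon\in[0,1]$ such that for all $x_1\in X_1$, all $x_1'$ and all $\sigma\in A^*$ with $x_1\xrightarrow{\sigma}x_1'$ there exist $x_2\in X_2$, $x_2'$ and $\tau\in A^*$ with $x_2\xrightarrow{\tau}x_2'$, $d_{\mathrm{Tr}}(\sigma,\tau)\le\varepsilon$ and $d_0(x_1',x_2')\le\varepsilon$.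
   Context: A metric transition system over $A$ is $(X,\to,d_A)$ with $\to\subseteq X\times A\times X$ and a metric $d_A\colon A\times A\to[0,1]$; $x\xrightarrow{\sigma}x'$ denotes a path labelled $\sigma$. $r\oplus s=\min\{r+s,1\}$, $r\ominus s=\max\{0,r-s\}$; $\bigvee\emptyset=0$, $\bigwedge\emptyset=1$. $\mathit{DPMet}(Y)$: directed pseudo-metrics $d\colon Y\times Y\to[0,1]$ ($d(y,y)=0$, $d(x,z)\le d(x,y)\oplus d(y,z)$), ordered pointwise; least fixpoints are taken in this lattice. $d_{\overrightarrow H}(U,V)=\bigvee_{u\in U}\bigwedge_{v\in V}d(u,v)$. $d_{\mathrm{Tr}}(\sigma_1,\sigma_2)=1$ if lengths differ, $d_{\mathrm{Tr}}(\varepsilon,\varepsilon)=0$, $d_{\mathrm{Tr}}(a_1\sigma_1',a_2\sigma_2')=\max\{d_A(a_1,a_2),d_{\mathrm{Tr}}(\sigma_1',\sigma_2')\}$. $\bigcirc_af(x)=\bigvee\{(1-d_A(b,a))\land f(x')\mid x\xrightarrow{b}x'\}$; $\tilde f(Y)=\bigvee_{x\in Y}f(x)$; $\alpha_T(\mathcal F)(X_1,X_2)=\bigvee_{f\in\mathcal F}(\tilde f(X_1)\ominus\tilde f(X_2))$; $\gamma_T(d)=\{f\in[0,1]^X\mid\forall X_1,X_2\colon\tilde f(X_1)\ominus\tilde f(X_2)\le d(X_1,X_2)\}$; $\mathit{lo}_T(\mathcal F)=\bigcup_{a\in A}\{\bigcirc_af\mid f\in\mathrm{cl}^{\mathrm{sh}}(\mathcal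 F)\}\cup\{1\}$ with $\mathrm{cl}^{\mathrm{sh}}$ the closure under shifts $f\mapsto f\ominus c$, $f\mapsto f\oplus c$; $\beta_T=\alpha_T\circ\mathit{lo}_T\circ\gamma_T$. *)

From HB Require Import structures.
From mathcomp Require Import all_boot all_order all_algebra.
From mathcomp Require Import all_classical all_reals.
Set Implicit Arguments. Unset Strict Implicit. Unset Printing Implicit Defensive.
Import Order.TTheory GRing.Theory Num.Theory.
Local Open Scope classical_set_scope.
Local Open Scope ring_scope.

Section Defs.
Variable R : realType.

Definition tadd (r s : R) : R := Num.min (r + s) 1.
Definition tsub (r s : R) : R := Num.max 0 (r - s).

(* Join / meet of subsets of [0,1] with the conventions
   \/ empty = 0 and /\ empty = 1. *)
Definition bigsup (S : set R) : R := sup (S `|` [set 0]).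
Definition biginf (S : set R) : R := inf (S `|` [set 1]).

Definition is_dpmet (Y : Type) (d : Y -> Y -> R) : Prop :=
  (forall x y, 0 <= d x y <= 1) /\
  (forall y, d y y = 0) /\
  (forall x y z, d x z <= tadd (d x y) (d y z)).

Definition is_metric01 (A : Type) (d : A -> A -> R) : Prop :=
  (forall a b, 0 <= d a b <= 1) /\
  (forall a b, d a b = 0 <-> a = b) /\
  (forall a b, d a b = d b a) /\
  (forall a b c, d a c <= d a b + d b c).

Variables (X A : Type) (trans : X -> A -> X -> Prop) (dA : A -> A -> R).

Inductive path : X -> seq A -> X -> Prop :=
| path_nil x : path x [::] x
| path_cons x a y s z : trans x a y -> path y s z -> path x (a :: s) z.

Fixpoint dTr (s1 s2 : seq A) : R :=
  match s1, s2 with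
  | [::], [::] => 0
  | a1 :: s1', a2 :: s2' => Num.max (dA a1 a2) (dTr s1' s2')
  | _, _ => 1
  end.

Definition dHaus (Y : Type) (d : Y -> Y -> R) (U V : set Y) : R :=
  bigsup [set r | exists2 u, U u & r = biginf [set d u v | v in V]].

Definition nextop (a : A) (f : X -> R) (x : X) : R :=
  bigsup [set r | exists b x', trans x b x' /\ r = Num.min (1 - dA b a) (f x')].

Definition lift (f : X -> R) (Y : set X) : R := bigsup (f @` Y).

Definition alphaT (F : set (X -> R)) (X1 X2 : set X) : R :=
  bigsup [set tsub (lift f X1) (lift f X2) | f in F].

Definition gammaT (d : set X -> set X -> R) : set (X -> R) :=
  [set f | (forall x, 0 <= f x <= 1) /\
           forall X1 X2, tsub (lift f X1) (lift f X2) <= d X1 X2].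

Inductive clsh (F : set (X -> R)) : (X -> R) -> Prop :=
| clsh_base f : F f -> clsh F f
| clsh_sub f c : clsh F f -> 0 <= c <= 1 -> clsh F (fun x => tsub (f x) c)
| clsh_add f c : clsh F f -> 0 <= c <= 1 -> clsh F (fun x => tadd (f x) c).

Definition loT (F : set (X -> R)) : set (X -> R) :=
  [set g | (exists a f, clsh F f /\ g = nextop a f) \/ g = (fun _ => 1)].

Definition betaT (d : set X -> set X -> R) : set X -> set X -> R :=
  alphaT (loT (gammaT d)).

Definition beta_d0 (d0 : X -> X -> R) (d : set X -> set X -> R)
  : set X -> set X -> R :=
  fun X1 X2 => Num.max (betaT d X1 X2) (dHaus d0 X1 X2).

Definition is_lfp (phi : (set X -> set X -> R) -> (set X -> set X -> R))
  (d : set X -> set X -> R) : Prop :=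
  is_dpmet d /\ phi d = d /\
  forall d', is_dpmet d' -> phi d' = d' -> forall X1 X2, d X1 X2 <= d' X1 X2.

Definition eps_set (d0 : X -> X -> R) (X1 X2 : set X) : set R :=
  [set e | 0 <= e <= 1 /\
     forall x1 x1' s, X1 x1 -> path x1 s x1' ->
       exists x2 x2' t, [/\ X2 x2, path x2 t x2', dTr s t <= e & d0 x1' x2' <= e]].

End Defs.

(* Let D(S,T) be the infimum in the statement.  D is a directed pseudo-metric
   (matchings compose), antitone in its second argument and determined by its
   values on singletons, D(S,T) = sup_{s in S} D({s},T); the same holds for
   every beta_d0(d), hence for every fixpoint.  For such a d the map
   x |-> d({x},U) lies in gamma_T(d), and testing beta_T(d)(S,T) against
   O_b(d({.},T') (+) (1 - e)), where T' collects the targets of steps out of T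
   labelled within e of b, shows that beta_T(d)(S,T) < e forces d({z},T') < e
   for every b-successor z of a state of S: the first step of a path from S
   is matched by a step from T.  Induction on the path gives D <= beta_d0(d)
   whenever beta_d0(d) <= d, so D lies below every fixpoint.  Conversely every
   function of lo_T(gamma_T(D)) is non-expansive for D (shifts are
   1-Lipschitz, and O_a is by the same one-step matching), whence
   beta_T(D) <= D and (d0)_H <= D; thus D is a fixpoint, and therefore the
   least one. *)

From Pilot Require Import Defs.
From HB Require Import structures.
From mathcomp Require Import all_boot all_order all_algebra.
From mathcomp Require Import all_classical all_reals.
From mathcomp Require Import lra.
Import Order.TTheory GRing.Theory Num.Theory.
Local Open Scope classical_set_scope.
Local Open Scope ring_scope.
Set Implicit Arguments. Unset Strict Implicit. Unset Printing Implicit Defensive.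

(* [Defs.lift] is otherwise shadowed by [fintype.lift]. *)
Local Notation lift := Defs.lift.
Local Notation tpath := Defs.path.

Section SupInf.
Variable R : realType.
Implicit Types (S : set R) (x c : R).

Lemma bigsup_ub S x : (forall y, S y -> y <= 1) -> S x -> x <= bigsup S.
Proof.
move=> S1 Sx; apply: ub_le_sup; last by left.
by exists 1 => y [/S1|->].
Qed.

Lemma bigsup_ge0 S : (forall y, S y -> y <= 1) -> 0 <= bigsup S.
Proof.
move=> S1; apply: ub_le_sup; last by right.
by exists 1 => y [/S1|->].
Qed.

Lemma ge_bigsup S c : 0 <= c -> (forall y, S y -> y <= c) -> bigsup S <= c.
Proof.
move=> c0 Sc; apply: ge_sup; first by exists 0; right.
by move=> y [/Sc|->].
Qed.

Lemma bigsup_gt S c : 0 <= c -> c < bigsup S -> exists2 y, S y & c < y.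
Proof.
move=> c0 /sup_gt[]; first by exists 0; right.
by move=> y [Sy|->] cy; [exists y | rewrite ltNge c0 in cy].
Qed.

Lemma biginf_lb S x : (forall y, S y -> 0 <= y) -> S x -> biginf S <= x.
Proof.
move=> S0 Sx; apply: ge_inf; last by left.
by exists 0 => y [/S0|->].
Qed.

Lemma biginf_le1 S : (forall y, S y -> 0 <= y) -> biginf S <= 1.
Proof.
move=> S0; apply: ge_inf; last by right.
by exists 0 => y [/S0|->].
Qed.

Lemma le_biginf S c : c <= 1 -> (forall y, S y -> c <= y) -> c <= biginf S.
Proof.
move=> c1 Sc; apply: lb_le_inf; first by exists 1; right.
by move=> y [/Sc|->].
Qed.

Lemma biginf_ge0 S : (forall y, S y -> 0 <= y) -> 0 <= biginf S.
Proof. by move=> S0; apply: le_biginf. Qed.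

Lemma biginf_lt S c : c <= 1 -> biginf S < c -> exists2 y, S y & y < c.
Proof.
move=> c1 /inf_lt[]; first by exists 1; right.
by move=> y [Sy|->] yc; [exists y | rewrite ltNge c1 in yc].
Qed.

Lemma ler_gt_le1 x c : x <= 1 ->
  (forall e, c < e -> e <= 1 -> x <= e) -> x <= c.
Proof.
move=> x1 xc; apply/ler_addgt0Pr => e e0.
have [ce1|] := leP (c + e) 1; first by apply: xc; rewrite // ltrDl.
by move=> /ltW; apply: le_trans x1.
Qed.

End SupInf.

Section Truncated.
Variable R : realType.
Implicit Types a b c : R.

Lemma tsub_ge0 a b : 0 <= tsub a b.
Proof. by rewrite le_max lexx. Qed.

Lemma subr_le_tsub a b : a - b <= tsub a b.
Proof. by rewrite le_max lexx orbT. Qed.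

Lemma tsub_le a b c : 0 <= c -> a <= b + c -> tsub a b <= c.
Proof. by move=> c0 abc; rewrite ge_max c0 lerBlDl. Qed.

Lemma tsub_le1 a b : a <= 1 -> 0 <= b -> tsub a b <= 1.
Proof. by move=> a1 b0; apply: tsub_le => //; lra. Qed.

Lemma le_tsubl a a' b : a <= a' -> tsub a b <= tsub a' b.
Proof.
by move=> aa'; rewrite ge_max tsub_ge0; apply: le_trans (subr_le_tsub _ _); lra.
Qed.

Lemma le_tsubr a b b' : b <= b' -> tsub a b' <= tsub a b.
Proof.
by move=> bb'; rewrite ge_max tsub_ge0; apply: le_trans (subr_le_tsub _ _); lra.
Qed.

Lemma tsubl_contract a b c : tsub a c - tsub b c <= tsub a b.
Proof.
rewrite lerBlDr ge_max; have := tsub_ge0 a b; have := subr_le_tsub a b.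
have := tsub_ge0 b c; have := subr_le_tsub b c; move=> *; apply/andP; split; lra.
Qed.

Lemma tadd_le_add a b : tadd a b <= a + b.
Proof. by rewrite ge_min lexx. Qed.

Lemma tadd01 a c : 0 <= a -> 0 <= c -> 0 <= tadd a c <= 1.
Proof. by move=> a0 c0; rewrite le_min ge_min lexx orbT ler01 andbT addr_ge0. Qed.

Lemma le_taddl a a' c : a <= a' -> tadd a c <= tadd a' c.
Proof. by move=> aa'; rewrite le_min !ge_min lexx !orbT andbT lerD2r aa'. Qed.

Lemma taddl_contract a b c : tadd a c - tadd b c <= tsub a b.
Proof.
have : tadd a c <= 1 by rewrite ge_min lexx orbT.
have := tsub_ge0 a b; have := subr_le_tsub a b; have := tadd_le_add a c.
case: (leP (b + c) 1) => [bc1|/ltW bc1].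
  by rewrite [tadd b c]/tadd min_l //; lra.
by rewrite [tadd b c]/tadd min_r //; lra.
Qed.

Lemma le_min_addr p q p' q' c : p' <= p + c -> q' <= q + c ->
  Num.min p' q' <= Num.min p q + c.
Proof.
move=> pp' qq'; rewrite [Num.min p q]minEle ge_min.
by case: ifP => _; [rewrite pp' | rewrite qq' orbT].
Qed.

End Truncated.

Section TraceDistance.
Variables (R : realType) (A : Type) (dA : A -> A -> R).
Hypothesis hdA : is_metric01 dA.

Lemma dA01 a b : 0 <= dA a b <= 1. Proof. by case: hdA. Qed.
Lemma dAxx a : dA a a = 0. Proof. by case: hdA => _ [/(_ a a) [_ ->]]. Qed.
Lemma dAC a b : dA a b = dA b a. Proof. by case: hdA => _ [_ []]. Qed.
Lemma dA_triangle a b c : dA a c <= dA a b + dA b c.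
Proof. by case: hdA => _ [_ [_]]. Qed.

Lemma dTr01 s t : 0 <= dTr dA s t <= 1.
Proof.
elim: s t => [|a s IH] [|b t] //=; rewrite ?lexx ?ler01 //.
have /andP[? ?] := dA01 a b; have /andP[? ?] := IH t.
rewrite le_max ge_max; apply/andP; split; [by apply/orP; left | exact/andP].
Qed.

Lemma dTrxx s : dTr dA s s = 0.
Proof. by elim: s => //= a s ->; rewrite dAxx maxxx. Qed.

Lemma dTr_triangle s t u : dTr dA s u <= dTr dA s t + dTr dA t u.
Proof.
elim: s t u => [|a s IH] [|b t] [|c u] /=; rewrite ?addr0 ?add0r ?lexx //.
- lra.
- by have /= /andP[? _] := dTr01 (b :: t) (c :: u); lra.
- by have /= /andP[_ ?] := dTr01 (a :: s) (c :: u); lra.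
- by have /= /andP[? _] := dTr01 (a :: s) (b :: t); lra.
rewrite ge_max; apply/andP; split.
  by apply: le_trans (dA_triangle a b c) _; apply: lerD; rewrite le_max lexx.
by apply: le_trans (IH t u) _; apply: lerD; rewrite le_max lexx orbT.
Qed.

End TraceDistance.

Section Lifting.
Variables (R : realType) (X : Type).
Implicit Types (f g : X -> R) (Y : set X).

Definition range01 f := forall x, 0 <= f x <= 1.

Lemma lift_ub f Y x : range01 f -> Y x -> f x <= lift f Y.
Proof.
move=> f01 Yx; apply: bigsup_ub; last by exists x.
by move=> _ [z _ <-]; case/andP: (f01 z).
Qed.

Lemma ge_lift f Y c : 0 <= c -> (forall x, Y x -> f x <= c) -> lift f Y <= c.
Proof. by move=> c0 fc; apply: ge_bigsup => // _ [x Yx <-]; apply: fc. Qed.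

Lemma lift01 f Y : range01 f -> 0 <= lift f Y <= 1.
Proof.
move=> f01; rewrite ge_lift ?andbT //; last by move=> x _; case/andP: (f01 x).
by apply: bigsup_ge0 => _ [x _ <-]; case/andP: (f01 x).
Qed.

Lemma le_lift f g Y : range01 g -> (forall x, Y x -> f x <= g x) -> lift f Y <= lift g Y.
Proof.
move=> g01 fg; apply: ge_lift; first by case/andP: (lift01 Y g01).
by move=> x Yx; apply: le_trans (fg x Yx) (lift_ub g01 Yx).
Qed.

Lemma lift_set1 f x : range01 f -> lift f [set x] = f x.
Proof.
move=> f01; apply/le_anti; rewrite lift_ub // andbT.
by apply: ge_lift => [|y ->]; first by case/andP: (f01 x).
Qed.

Lemma lift_set0 f : lift f set0 = 0.
Proof. by apply/le_anti; rewrite ge_lift //= bigsup_ge0 // => _ [? []]. Qed.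

Lemma lift_gt f Y eps : range01 f -> Y !=set0 -> 0 < eps ->
  exists2 y, Y y & lift f Y - eps < f y.
Proof.
move=> f01 [y0 Yy0] eps0; have [le0|lt0] := leP 0 (lift f Y - eps).
  have [|_ [y Yy <-]] := bigsup_gt le0 (_ : lift f Y - eps < lift f Y).
    by rewrite gtrBl.
  by exists y.
by exists y0 => //; apply: lt_le_trans lt0 _; case/andP: (f01 y0).
Qed.

End Lifting.

Section DirectedHausdorff.
Variables (R : realType) (X : Type) (d : X -> X -> R).
Hypothesis d01 : forall x y, 0 <= d x y <= 1.
Implicit Types S T : set X.

Definition point_dist (u : X) T : R := biginf [set d u v | v in T].

Lemma point_dist01 u T : 0 <= point_dist u T <= 1.
Proof.
have d0 : forall y, [set d u v | v in T] y -> 0 <= y.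
  by move=> _ [v _ <-]; case/andP: (d01 u v).
by rewrite biginf_ge0 // biginf_le1.
Qed.

Lemma dHaus_ub S T u : S u -> point_dist u T <= dHaus d S T.
Proof.
move=> Su; apply: bigsup_ub; last by exists u.
by move=> _ [v _ ->]; case/andP: (point_dist01 v T).
Qed.

Lemma ge_dHaus S T c : 0 <= c -> (forall u, S u -> point_dist u T <= c) ->
  dHaus d S T <= c.
Proof. by move=> c0 Sc; apply: ge_bigsup => // _ [u Su ->]; apply: Sc. Qed.

Lemma dHaus01 S T : 0 <= dHaus d S T <= 1.
Proof.
rewrite ge_dHaus ?andbT //; last by move=> u _; case/andP: (point_dist01 u T).
by apply: bigsup_ge0 => _ [v _ ->]; case/andP: (point_dist01 v T).
Qed.

Lemma dHaus_lt S T e x : e <= 1 -> dHaus d S T < e -> S x -> exists2 v, T v & d x v < e.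
Proof.
move=> e1 lte Sx; have /(biginf_lt e1) [_ [v Tv <-]] : point_dist x T < e.
  exact: le_lt_trans (dHaus_ub T Sx) lte.
by exists v.
Qed.

Lemma dHaus_set1 S T s : S s -> dHaus d [set s] T <= dHaus d S T.
Proof.
move=> Ss; apply: ge_dHaus; first by case/andP: (dHaus01 S T).
by move=> u /= ->; apply: dHaus_ub.
Qed.

Lemma dHaus_antir S T T' : T `<=` T' -> dHaus d S T' <= dHaus d S T.
Proof.
move=> TT'; apply: ge_dHaus; first by case/andP: (dHaus01 S T).
move=> u Su; apply: le_trans (dHaus_ub T Su).
apply: le_biginf; first by case/andP: (point_dist01 u T').
move=> _ [v Tv <-]; apply: biginf_lb; last by exists v => //; apply: TT'.
by move=> _ [w _ <-]; case/andP: (d01 u w).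
Qed.

Lemma dHaus_decomp S T : dHaus d S T <= lift (fun s => dHaus d [set s] T) S.
Proof.
have h01 : range01 (fun s => dHaus d [set s] T) by move=> s; apply: dHaus01.
apply: ge_dHaus; first by case/andP: (lift01 S h01).
by move=> u Su; apply: le_trans (lift_ub h01 Su); apply: dHaus_ub.
Qed.

End DirectedHausdorff.

Section SupDecomposable.
Variables (R : realType) (X : Type).
Implicit Types (d : set X -> set X -> R) (S T : set X).

Definition sup_decomposable d := forall S T, d S T = lift (fun s => d [set s] T) S.

Definition antitone_right d := forall S T T', T `<=` T' -> d S T' <= d S T.

Lemma sup_decomposable_of_le d : (forall S T, 0 <= d S T <= 1) ->
  (forall S T s, S s -> d [set s] T <= d S T) ->
  (forall S T, d S T <= lift (fun s => d [set s] T) S) -> sup_decomposable d.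
Proof.
move=> d01 d_set1 d_decomp S T; apply/le_anti; rewrite d_decomp /=.
by apply: ge_lift => [|s Ss]; [case/andP: (d01 S T) | apply: d_set1].
Qed.

End SupDecomposable.

Section TransitionSystem.
Variables (R : realType) (X A : Type) (trans : X -> A -> X -> Prop).
Variables (dA : A -> A -> R) (d0 : X -> X -> R).
Hypotheses (hdA : is_metric01 dA) (hd0 : is_dpmet d0).
Implicit Types (S T U : set X) (d : set X -> set X -> R) (f g : X -> R) (e : R).

Local Notation BT := (betaT trans dA).
Local Notation B0 := (beta_d0 trans dA d0).

Lemma d0_01 x y : 0 <= d0 x y <= 1. Proof. by case: hd0. Qed.
Lemma d0xx x : d0 x x = 0. Proof. by case: hd0 => _ []. Qed.
Lemma d0_triangle x y z : d0 x z <= tadd (d0 x y) (d0 y z).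
Proof. by case: hd0 => _ []. Qed.

Lemma tpath_nilE x y : tpath trans x [::] y -> x = y.
Proof. by inversion 1. Qed.

Lemma tpath_consE x a s y : tpath trans x (a :: s) y ->
  exists2 z, trans x a z & tpath trans z s y.
Proof. by inversion 1; exists y0. Qed.

Definition matched S T e := forall x1 x1' s, S x1 -> tpath trans x1 s x1' ->
  exists x2 x2' t, [/\ T x2, tpath trans x2 t x2', dTr dA s t <= e & d0 x1' x2' <= e].

Definition trace_dist S T : R := biginf (eps_set trans dA d0 S T).

Lemma matched_le S T e e' : e <= e' -> matched S T e -> matched S T e'.
Proof.
move=> ee' mST x1 x1' s Sx p; have [x2 [x2' [t [? ? st dx]]]] := mST x1 x1' s Sx p.
by exists x2, x2', t; split => //; apply: le_trans ee'.
Qed.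

Lemma matched_trans S T U e e' : matched S T e -> matched T U e' -> matched S U (e + e').
Proof.
move=> mST mTU x1 x1' s Sx p.
have [x2 [x2' [t [Tx2 p2 st dx12]]]] := mST x1 x1' s Sx p.
have [x3 [x3' [u [Ux3 p3 tu dx23]]]] := mTU x2 x2' t Tx2 p2.
exists x3, x3', u; split => //.
  by apply: le_trans (dTr_triangle hdA s t u) _; apply: lerD.
apply: le_trans (d0_triangle x1' x2' x3') _; apply: le_trans (tadd_le_add _ _) _.
exact: lerD.
Qed.

Lemma trace_dist01 S T : 0 <= trace_dist S T <= 1.
Proof.
have e0 : forall e, eps_set trans dA d0 S T e -> 0 <= e by move=> e [/andP[]].
by rewrite biginf_ge0 ?biginf_le1.
Qed.

Lemma trace_dist_le S T e : 0 <= e <= 1 -> matched S T e -> trace_dist S T <= e.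
Proof. by move=> e01 mST; apply: biginf_lb => [e' [/andP[]]|]. Qed.

Lemma trace_dist_lt S T e : e <= 1 -> trace_dist S T < e -> matched S T e.
Proof. by move=> e1 /(biginf_lt e1) [e' [_ mST] /ltW e'e]; apply: matched_le mST. Qed.

Lemma trace_distxx S : trace_dist S S = 0.
Proof.
apply/le_anti; rewrite (proj1 (andP (trace_dist01 S S))) andbT.
apply: trace_dist_le; first by rewrite lexx ler01.
move=> x x' s Sx p; exists x, x', s; split => //.
  by rewrite dTrxx.
by rewrite d0xx.
Qed.

Lemma trace_dist_triangle S T U :
  trace_dist S U <= tadd (trace_dist S T) (trace_dist T U).
Proof.
have /andP[? ?] := trace_dist01 S T; have /andP[? ?] := trace_dist01 T U.
have /andP[? ?] := trace_dist01 S U.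
rewrite le_min; apply/andP; split => //; apply/ler_addgt0Pr => eps eps0.
set e := trace_dist S T + eps / 2; set e' := trace_dist T U + eps / 2.
have -> : trace_dist S T + trace_dist T U + eps = e + e'.
  by rewrite /e /e' addrACA -splitr.
have [ee'1|] := leP (e + e') 1; last lra.
rewrite /e /e' in ee'1 *; apply: trace_dist_le; first by apply/andP; split; lra.
by apply: matched_trans; apply: trace_dist_lt; lra.
Qed.

Lemma trace_dist_dpmet : is_dpmet trace_dist.
Proof.
split; first exact: trace_dist01.
by split; [exact: trace_distxx | exact: trace_dist_triangle].
Qed.

Lemma trace_dist_set1 S T s : S s -> trace_dist [set s] T <= trace_dist S T.
Proof.
move=> Ss; apply: le_biginf; first by case/andP: (trace_dist01 [set s] T).
by move=> e [e01 mST]; apply: trace_dist_le => // x x' w /= ->; apply: mST.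
Qed.

Lemma trace_dist_antir : antitone_right trace_dist.
Proof.
move=> S T T' TT'; apply: le_biginf; first by case/andP: (trace_dist01 S T').
move=> e [e01 mST]; apply: trace_dist_le => // x x' s Sx p.
have [x2 [x2' [t [? ? ? ?]]]] := mST x x' s Sx p.
by exists x2, x2', t; split => //; apply: TT'.
Qed.

Lemma trace_dist_decomp S T : trace_dist S T <= lift (fun s => trace_dist [set s] T) S.
Proof.
have h01 : range01 (fun s => trace_dist [set s] T) by move=> s; apply: trace_dist01.
apply: ler_gt_le1 => [|e lte e1]; first by case/andP: (trace_dist01 S T).
apply: trace_dist_le.
  by rewrite e1 andbT; apply: le_trans (ltW lte); case/andP: (lift01 S h01).
move=> x x' s Sx.
by apply: (trace_dist_lt e1 (le_lt_trans (lift_ub h01 Sx) lte)).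
Qed.

Lemma trace_dist_sup_decomposable : sup_decomposable trace_dist.
Proof.
apply: sup_decomposable_of_le; [exact: trace_dist01 | exact: trace_dist_set1 |].
exact: trace_dist_decomp.
Qed.

Lemma trace_dist_set0r S x : S x -> trace_dist S set0 = 1.
Proof.
move=> Sx; apply/le_anti; rewrite (proj2 (andP (trace_dist01 S set0))) /=.
apply: le_biginf => // e [_ mS0].
by have [? [? [? []]]] := mS0 x x [::] Sx (path_nil trans x).
Qed.

Lemma nextop01 a f : range01 (nextop trans dA a f).
Proof.
have elt1 x : forall r, [set r | exists b x', trans x b x' /\
    r = Num.min (1 - dA b a) (f x')] r -> r <= 1.
  move=> _ [b [x' [_ ->]]]; rewrite ge_min; apply/orP; left.
  by have /andP[? ?] := dA01 hdA b a; lra.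
by move=> x; rewrite bigsup_ge0 ?ge_bigsup // => r /elt1.
Qed.

Lemma le_nextop a f x b x' : trans x b x' ->
  Num.min (1 - dA b a) (f x') <= nextop trans dA a f x.
Proof.
move=> xx'; apply: bigsup_ub; last by exists b, x'.
move=> _ [b' [y' [_ ->]]]; rewrite ge_min; apply/orP; left.
by have /andP[? ?] := dA01 hdA b' a; lra.
Qed.

Lemma ge_nextop a f x c : 0 <= c ->
  (forall b x', trans x b x' -> Num.min (1 - dA b a) (f x') <= c) ->
  nextop trans dA a f x <= c.
Proof. by move=> c0 fc; apply: ge_bigsup => // _ [b [x' [xx' ->]]]; apply: fc. Qed.

Lemma loT01 d g : loT trans dA (gammaT d) g -> range01 g.
Proof. by case=> [[a [f [_ ->]]]|-> x]; [exact: nextop01 | rewrite lexx ler01]. Qed.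

Lemma le_betaT d S T g : loT trans dA (gammaT d) g ->
  tsub (lift g S) (lift g T) <= BT d S T.
Proof.
move=> lo_g; apply: bigsup_ub; last by exists g.
move=> _ [h lo_h <-]; have /andP[_ ?] := lift01 S (loT01 lo_h).
by apply: tsub_le1 => //; case/andP: (lift01 T (loT01 lo_h)).
Qed.

Lemma ge_betaT d S T c : 0 <= c ->
  (forall g, loT trans dA (gammaT d) g -> tsub (lift g S) (lift g T) <= c) ->
  BT d S T <= c.
Proof. by move=> c0 gc; apply: ge_bigsup => // _ [g lo_g <-]; apply: gc. Qed.

Lemma betaT01 d S T : 0 <= BT d S T <= 1.
Proof.
rewrite ge_betaT ?andbT // => [|g lo_g]; last first.
  have /andP[_ ?] := lift01 S (loT01 lo_g).
  by apply: tsub_le1 => //; case/andP: (lift01 T (loT01 lo_g)).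
by apply: le_trans (le_betaT S T (or_intror erefl)); apply: tsub_ge0.
Qed.

Lemma betaT_set1 d S T s : S s -> BT d [set s] T <= BT d S T.
Proof.
move=> Ss; apply: ge_betaT => [|g lo_g]; first by case/andP: (betaT01 d S T).
apply: le_trans (le_betaT S T lo_g); apply: le_tsubl.
by rewrite lift_set1 ?lift_ub //; apply: loT01 lo_g.
Qed.

Lemma betaT_antir d : antitone_right (BT d).
Proof.
move=> S T T' TT'; apply: ge_betaT => [|g lo_g]; first by case/andP: (betaT01 d S T).
apply: le_trans (le_betaT S T lo_g); apply: le_tsubr.
have g01 := loT01 lo_g; apply: ge_lift => [|x Tx]; first by case/andP: (lift01 T' g01).
exact: lift_ub g01 (TT' _ Tx).
Qed.

Lemma betaT_decomp d S T : BT d S T <= lift (fun s => BT d [set s] T) S.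
Proof.
have h01 : range01 (fun s => BT d [set s] T) by move=> s; apply: betaT01.
have /andP[L0 _] := lift01 S h01.
apply: ge_betaT => // g lo_g; have g01 := loT01 lo_g; apply: tsub_le => //.
apply: ge_lift => [|s Ss]; first by case/andP: (lift01 T g01) => *; apply: addr_ge0.
have := subr_le_tsub (lift g [set s]) (lift g T); have := le_betaT [set s] T lo_g.
have := lift_ub h01 Ss; rewrite lift_set1 //=; lra.
Qed.

Lemma beta_d0_01 d S T : 0 <= B0 d S T <= 1.
Proof.
have /andP[? ?] := betaT01 d S T; have /andP[? ?] := dHaus01 d0_01 S T.
by rewrite /beta_d0 le_max ge_max; apply/andP; split; [apply/orP; left | apply/andP].
Qed.

Lemma beta_d0_sup_decomposable d : sup_decomposable (B0 d).
Proof.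
apply: sup_decomposable_of_le => [|S T s Ss|S T]; first exact: beta_d0_01.
  rewrite /beta_d0 ge_max !le_max betaT_set1 // dHaus_set1 ?orbT //.
  exact: d0_01.
have h01 : range01 (fun s => B0 d [set s] T) by move=> s; apply: beta_d0_01.
rewrite /beta_d0 ge_max; apply/andP; split.
  apply: le_trans (betaT_decomp d S T) _; apply: le_lift => // s _.
  by rewrite le_max lexx.
apply: le_trans (dHaus_decomp d0_01 S T) _; apply: le_lift => // s _.
by rewrite le_max lexx orbT.
Qed.

Lemma beta_d0_antitone_right d : antitone_right (B0 d).
Proof.
move=> S T T' TT'; rewrite /beta_d0 ge_max !le_max betaT_antir // dHaus_antir ?orbT //.
exact: d0_01.
Qed.

Definition nonexpansive d f := forall S T, tsub (lift f S) (lift f T) <= d S T.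

Lemma gammaT_set1 d U : is_dpmet d -> sup_decomposable d ->
  gammaT d (fun x => d [set x] U).
Proof.
case=> d01 [_ d_triangle] d_dec; split=> [x|S T]; first exact: d01.
rewrite -!d_dec; apply: tsub_le; first by case/andP: (d01 S T).
by apply: le_trans (d_triangle S T U) _; rewrite addrC tadd_le_add.
Qed.

Definition near_successors T b e :=
  [set y' | exists y b', [/\ T y, trans y b' y' & dA b' b <= e]].

(* The test function [g = O_b (d({.}, T') (+) (1 - e))] is [1] at [x] but at
   most [1 - e] on [T]: a [b']-step from [T] either has [dA b' b > e] or ends
   in [T'], where [d({.}, T')] vanishes. *)
Lemma betaT_lt_step d S T e x b z : is_dpmet d -> sup_decomposable d ->
  antitone_right d -> 0 <= e <= 1 -> S x -> trans x b z -> BT d S T < e ->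
  d [set z] (near_successors T b e) < e.
Proof.
move=> dd d_dec d_anti /andP[e0 e1] Sx xz; rewrite !ltNge; apply: contra => ez.
have [d01 [dxx _]] := dd; set T' := near_successors T b e.
pose f x := tadd (d [set x] T') (1 - e); pose g := nextop trans dA b f.
have lo_g : loT trans dA (gammaT d) g.
  left; exists b, f; split => //.
  by apply: clsh_add; [apply: clsh_base; apply: gammaT_set1 | apply/andP; split; lra].
have g01 := loT01 lo_g.
have gS : 1 <= lift g S.
  apply: le_trans (lift_ub g01 Sx); apply: le_trans (le_nextop b f xz).
  by rewrite dAxx // subr0 le_min lexx /= le_min lexx andbT; lra.
have gT : lift g T <= 1 - e.
  apply: ge_lift => [|y Ty]; first lra.
  apply: ge_nextop => [|b' y' yy']; first lra.
  rewrite ge_min; have [b'b|] := leP (dA b' b) e; last by move=> *; apply/orP; left; lra.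
  have -> : f y' = tadd 0 (1 - e).
    congr tadd; apply/le_anti; rewrite (proj1 (andP (d01 _ _))) andbT.
    by rewrite -(dxx [set y']); apply: d_anti => _ ->; exists y, b'.
  by rewrite ge_min add0r lexx orbT.
apply: le_trans (le_betaT S T lo_g); apply: le_trans (subr_le_tsub _ _); lra.
Qed.

Lemma matched_of_beta_d0_lt d e S T : is_dpmet d -> sup_decomposable d ->
  antitone_right d -> (forall S T, B0 d S T <= d S T) -> 0 <= e <= 1 ->
  B0 d S T < e -> matched S T e.
Proof.
move=> dd d_dec d_anti d_post /andP[e0 e1] lte x1 x1' s.
elim: s S T x1 lte => [|b s IH] S T x lte Sx p.
  rewrite -(tpath_nilE p).
  have ltH : dHaus d0 S T < e by apply: le_lt_trans lte; rewrite le_max lexx orbT.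
  have [v Tv xv] := dHaus_lt d0_01 e1 ltH Sx.
  by exists v, v, [::]; split => //; [exact: path_nil | exact: ltW].
have [z xz p'] := tpath_consE p.
have lte' : BT d S T < e by apply: le_lt_trans lte; rewrite le_max lexx.
have ltz := betaT_lt_step dd d_dec d_anti (introT andP (conj e0 e1)) Sx xz lte'.
have [y' [x2' [t [[y [b' [Ty yy' b'b]]] p2 st dx]]]] :=
  IH _ _ z (le_lt_trans (d_post _ _) ltz) erefl p'.
exists y, x2', (b' :: t); split => //; first exact: path_cons yy' p2.
by rewrite /= ge_max dAC // b'b.
Qed.

Lemma trace_dist_le_beta_d0 d : is_dpmet d -> sup_decomposable d ->
  antitone_right d -> (forall S T, B0 d S T <= d S T) ->
  forall S T, trace_dist S T <= B0 d S T.
Proof.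
move=> dd d_dec d_anti d_post S T.
apply: ler_gt_le1 => [|e lte e1]; first by case/andP: (trace_dist01 S T).
have e01 : 0 <= e <= 1.
  by rewrite e1 andbT; apply: le_trans (ltW lte); case/andP: (beta_d0_01 d S T).
by apply: trace_dist_le e01 (matched_of_beta_d0_lt dd d_dec d_anti d_post e01 lte).
Qed.

Lemma nonexpansive_set0r f S : range01 f ->
  tsub (lift f S) (lift f set0) <= trace_dist S set0.
Proof.
move=> f01; rewrite lift_set0; have [->|/set0P[x Sx]] := eqVneq S set0.
  by rewrite lift_set0 /tsub subrr maxxx; case/andP: (trace_dist01 set0 set0).
by rewrite (trace_dist_set0r Sx) tsub_le1 //; case/andP: (lift01 S f01).
Qed.

Lemma gammaT_comp (phi : R -> R) f :
  (forall a, 0 <= a <= 1 -> 0 <= phi a <= 1) -> {homo phi : a b / a <= b} ->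
  (forall a b, phi a - phi b <= tsub a b) ->
  gammaT trace_dist f -> gammaT trace_dist (fun x => phi (f x)).
Proof.
move=> phi01 phi_homo phi_contr [f01 fD].
have pf01 : range01 (fun x => phi (f x)) by move=> x; apply: phi01.
split=> // S T; have [->|/set0P hT] := eqVneq T set0; first exact: nonexpansive_set0r.
have LS := lift01 S f01; have LT := lift01 T f01.
have pS : lift (fun x => phi (f x)) S <= phi (lift f S).
  apply: ge_lift => [|x Sx]; first by case/andP: (phi01 _ LS).
  exact: phi_homo (lift_ub f01 Sx).
have pT : phi (lift f T) <= lift (fun x => phi (f x)) T.
  apply/ler_addgt0Pr => eps eps0; have [t Tt ft] := lift_gt f01 hT eps0.
  have := phi_contr (lift f T) (f t); have := lift_ub pf01 Tt.
  have : tsub (lift f T) (f t) <= eps by apply: tsub_le (ltW eps0) _; lra.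
  lra.
apply: tsub_le; first by case/andP: (trace_dist01 S T).
by have := phi_contr (lift f S) (lift f T); have := fD S T; lra.
Qed.

Lemma gammaT_clsh f : clsh (gammaT trace_dist) f -> gammaT trace_dist f.
Proof.
elim=> // g c _ gD /andP[c0 c1].
  apply: (gammaT_comp (phi := fun a => tsub a c) _ _ _ gD).
  - by move=> a /andP[_ a1]; rewrite tsub_ge0 tsub_le1.
  - by move=> a b; apply: le_tsubl.
  - by move=> a b; apply: tsubl_contract.
apply: (gammaT_comp (phi := fun a => tadd a c) _ _ _ gD).
- by move=> a /andP[a0 _]; apply: tadd01.
- by move=> a b; apply: le_taddl.
- by move=> a b; apply: taddl_contract.
Qed.

Lemma matched_near_successors S T e x b x' : e < 1 -> matched S T e -> S x ->
  trans x b x' -> matched [set x'] (near_successors T b e) e.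
Proof.
move=> e1 mST Sx xx' _ y' s -> p.
have [x2 [x2' [[|b' t] [Tx2 p2 st dx]]]] := mST x y' (b :: s) Sx (path_cons xx' p).
  by rewrite /= leNgt e1 in st.
have [y2 x2y2 p3] := tpath_consE p2; move: st; rewrite /= ge_max => /andP[bb' st].
by exists y2, x2', t; split => //; exists x2, b'; rewrite dAC.
Qed.

Lemma nonexpansive_nextop a f : gammaT trace_dist f ->
  nonexpansive trace_dist (nextop trans dA a f).
Proof.
move=> [f01 fD] S T; set g := nextop trans dA a f.
have g01 : range01 g := nextop01 a f.
have /andP[gT0 gT1] := lift01 T g01; have /andP[gS0 gS1] := lift01 S g01.
apply: ler_gt_le1 => [|e lte e1]; first exact: tsub_le1.
have [e1'|elt1] := leP 1 e; first exact: le_trans (tsub_le1 _ _) e1'.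
have e0 : 0 <= e by apply: le_trans (ltW lte); case/andP: (trace_dist01 S T).
apply: tsub_le => //; apply: ge_lift => [|x Sx]; first lra.
apply: ge_nextop => [|b x' xx']; first lra.
set T' := near_successors T b e.
have fx' : f x' <= lift f T' + e.
  have : trace_dist [set x'] T' <= e.
    apply: trace_dist_le; first by rewrite e0 e1.
    exact: matched_near_successors elt1 (trace_dist_lt e1 lte) Sx xx'.
  have := fD [set x'] T'; have := subr_le_tsub (lift f [set x']) (lift f T').
  by rewrite lift_set1 //; lra.
have /andP[? ?] := dA01 hdA b a.
have [T'0|/set0P hT'] := eqVneq T' set0.
  by rewrite T'0 lift_set0 in fx'; rewrite ge_min; apply/orP; right; lra.
apply/ler_addgt0Pr => eps eps0.
have [y' [y [b' [Ty yy' b'b]]] fy'] := lift_gt f01 hT' eps0.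
apply: le_trans (le_min_addr (p := 1 - dA b' a) (q := f y') (c := e + eps) _ _) _.
- by have := dA_triangle hdA b' b a; rewrite dAC //; lra.
- lra.
have := le_nextop a f yy'; have := lift_ub g01 Ty; rewrite /g; lra.
Qed.

Lemma betaT_trace_dist_le S T : BT trace_dist S T <= trace_dist S T.
Proof.
have /andP[D0 D1] := trace_dist01 S T.
apply: ge_betaT => // g [[a [f [cf ->]]]|->].
  by apply: (nonexpansive_nextop a (gammaT_clsh cf)).
have c01 : range01 (fun _ : X => 1 : R) by move=> x; rewrite lexx ler01.
have [->|/set0P[y Ty]] := eqVneq T set0; first exact: nonexpansive_set0r.
have -> : lift (fun=> 1) T = 1 :> R.
  by apply/le_anti; rewrite ge_lift ?ler01 //= (lift_ub c01 Ty).
by apply: tsub_le => //; have /andP[_ ?] := lift01 S c01; lra.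
Qed.

Lemma dHaus_le_trace_dist S T : dHaus d0 S T <= trace_dist S T.
Proof.
apply: ler_gt_le1 => [|e lte e1]; first by case/andP: (dHaus01 d0_01 S T).
apply: ge_dHaus => [|u Su].
  by apply: le_trans (ltW lte); case/andP: (trace_dist01 S T).
have [x [x' [[|b t] [Tx p st ux']]]] := trace_dist_lt e1 lte Su (path_nil trans u).
  rewrite -(tpath_nilE p) in ux'; apply: le_trans ux'; apply: biginf_lb; last by exists x.
  by move=> _ [w _ <-]; case/andP: (d0_01 u w).
by apply: le_trans st; case/andP: (point_dist01 d0_01 u T).
Qed.

Lemma beta_d0_trace_dist_le S T : B0 trace_dist S T <= trace_dist S T.
Proof. by rewrite ge_max betaT_trace_dist_le dHaus_le_trace_dist. Qed.

Lemma trace_dist_lfp : is_lfp B0 trace_dist.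
Proof.
have post := beta_d0_trace_dist_le.
split; first exact: trace_dist_dpmet.
split.
  apply/funext => S; apply/funext => T; apply/le_anti; rewrite post /=.
  exact: trace_dist_le_beta_d0 trace_dist_dpmet trace_dist_sup_decomposable
    trace_dist_antir post S T.
move=> d dd dfix S T; rewrite -dfix.
have d_dec := beta_d0_sup_decomposable d; have d_anti := beta_d0_antitone_right d.
rewrite dfix in d_dec d_anti.
by apply: trace_dist_le_beta_d0 => // ? ?; rewrite dfix.
Qed.

End TransitionSystem.

Lemma is_lfp_unique (R : realType) (X : Type)
    (phi : (set X -> set X -> R) -> set X -> set X -> R) (d d' : set X -> set X -> R) :
  is_lfp phi d -> is_lfp phi d' -> forall S T, d S T = d' S T.
Proof.
move=> [dd [dfix dleast]] [dd' [dfix' dleast']] S T.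
by apply/le_anti; rewrite dleast // dleast'.
Qed.

Theorem mainTheorem5 (R : realType) (X A : Type)
  (trans : X -> A -> X -> Prop) (dA : A -> A -> R) (d0 : X -> X -> R) :
  is_metric01 dA -> is_dpmet d0 ->
  (exists d, is_lfp (beta_d0 trans dA d0) d) /\
  (forall d, is_lfp (beta_d0 trans dA d0) d ->
     forall X1 X2 : set X, d X1 X2 = biginf (eps_set trans dA d0 X1 X2)).
Proof.
move=> hdA hd0; have lfp := trace_dist_lfp trans hdA hd0.
split=> [|d dlfp]; first by eexists; exact: lfp.
exact: is_lfp_unique dlfp lfp.
Qed.
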